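(* Let $\mathcal G=(\mathcal V,\mathcal E,W)$ be a network, $h\in\mathbb{R}^{\mathcal V}$, and consider the SNC game with binary actions on $\mathcal G$ with external field $h$. Then: (i) the game is an exact potential game if and only if $\mathcal G$ is undirected. Moreover, if $\mathcal G$ is undirected, then: (ii) a function $\Phi:\mathcal X\to\mathbb{R}$ is an exact potential function for the game if and only if there exists a constant $C\in\mathbb{R}$ such that $\Phi(x)=\frac12\sum_{i,j\in\mathcal V}W_{ij}x_ix_j+\sum_{i\in\mathcal V}h_ix_i+C$ for all $x\in\mathcal X$; (iii) there exists a globally BR-stable set $\overline{\mathcal N}$ with $\arg\max_{x\in\mathcal X}\Phi(x)\subseteq\overline{\mathcal N}\subseteq\mathcal N$, where $\Phi(x)=\frac12\sum_{i,j}W_{ij}x_ix_j+\sum_ih_ix_i$ and $\mathcal N$ is the set of Nash equilibria.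
   Context: A network is a triple $\mathcal G=(\mathcal V,\mathcal E,W)$ where $\mathcal V$ is a finite nonempty set, $\mathcal E\subseteq\mathcal V\times\mathcal V$, and $W\in\mathbb{R}^{\mathcal V\times\mathcal V}$ has zero diagonal and satisfies $W_{ij}\neq0$ iff $(i,j)\in\mathcal E$ (weights may have either sign). It is undirected if $W=W^T$. The SNC game with binary actions on $\mathcal G$ with external field $h\in\mathbb{R}^{\mathcal V}$ has player set $\mathcal V$, action set $\{-1,+1\}$ for each player, strategy profiles $\mathcal X=\{\pm1\}^{\mathcal V}$, and utilities $u_i(x)=h_ix_i+x_i\sum_{j\in\mathcal V}W_{ij}x_j$. Best responses $\mathcal B_i(x_{-i})=\arg\max_{x_i\in\{\pm1\}}u_i(x_i,x_{-i})$; Nash equilibrium: $x^*_i\in\mathcal B_i(x^*_{-i})$ for all $i$. The game is exact potential with potential $\Phi:\mathcal X\to\mathbb{R}$ if $u_i(y)-u_i(x)=\Phi(y)-\Phi(x)$ whenever $x_{-i}=y_{-i}$. A BR-path of length $l\ge0$ from $x$ to $y$ is a sequence $x^{(0)}=x,\dots,x^{(l)}=y$ such that for each $k$ some player $i_k$ has $x^{(k)}_{-i_k}=x^{(k-1)}_{-i_k}$ and $x^{(k)}_{i_k}\in\mathcal B_{i_k}(x^{(k-1)}_{-i_k})\setminus\{x^{(k-1)}_{i_k}\}$. A set $\mathcal X^*\subseteq\mathcal X$ is globally BR-reachable if from every profile there is a BR-path to some element of $\mathcal X^*$; BR-invariant if there is no BR-path from an element of $\mathcal X^*$ to an element outside;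 globally BR-stable if both. *)

From HB Require Import structures.
From mathcomp Require Import all_boot all_order all_algebra.
From mathcomp Require Import reals.
Set Implicit Arguments. Unset Strict Implicit. Unset Printing Implicit Defensive.
Import Order.TTheory GRing.Theory Num.Theory.
Local Open Scope ring_scope.

Definition act (R : realType) (b : bool) : R := if b then 1 else -1.

(* Strategy profiles X = {+-1}^V, encoded as finite functions V -> bool. *)
Notation profile V := {ffun V -> bool}.

(* A network: weights W with zero diagonal (edges = nonzero entries). *)
Definition zero_diag (R : realType) (V : finType) (W : V -> V -> R) :=
  forall i, W i i = 0.

Definition undirected (R : realType) (V : finType) (W : V -> V -> R) :=
  forall i j, W i j = W j i.

Definition util (R : realType) (V : finType) (W : V -> V -> R) (h : V -> R)
  (i : V) (x : profile V) : R :=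
  h i * act R (x i) + act R (x i) * \sum_(j : V) W i j * act R (x j).

Definition upd (V : finType) (x : profile V) (i : V) (a : bool) : profile V :=
  [ffun j => if j == i then a else x j].

Definition best_resp (R : realType) (V : finType) (W : V -> V -> R) (h : V -> R)
  (i : V) (x : profile V) (a : bool) : Prop :=
  forall b : bool, util W h i (upd x i b) <= util W h i (upd x i a).

Definition nash (R : realType) (V : finType) (W : V -> V -> R) (h : V -> R)
  (x : profile V) : Prop :=
  forall i, best_resp W h i x (x i).

Definition is_exact_potential (R : realType) (V : finType) (W : V -> V -> R)
  (h : V -> R) (Phi : profile V -> R) : Prop :=
  forall (i : V) (x y : profile V), (forall j, j != i -> x j = y j) ->
    util W h i y - util W h i x = Phi y - Phi x.

Definition exact_potential_game (R : realType) (V : finType) (W : V -> V -> R)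
  (h : V -> R) : Prop :=
  exists Phi : profile V -> R, is_exact_potential W h Phi.

Definition br_step (R : realType) (V : finType) (W : V -> V -> R) (h : V -> R)
  (x y : profile V) : Prop :=
  exists i : V, (forall j, j != i -> y j = x j) /\
    best_resp W h i x (y i) /\ y i != x i.

Inductive br_path (R : realType) (V : finType) (W : V -> V -> R) (h : V -> R)
  : profile V -> profile V -> Prop :=
| br_path_nil x : br_path W h x x
| br_path_cons x y z : br_step W h x y -> br_path W h y z -> br_path W h x z.

Definition globally_BR_reachable (R : realType) (V : finType) (W : V -> V -> R)
  (h : V -> R) (S : {set profile V}) : Prop :=
  forall x, exists2 y, y \in S & br_path W h x y.

Definition BR_invariant (R : realType) (V : finType) (W : V -> V -> R)
  (h : V -> R) (S : {set profile V}) : Prop :=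
  forall x y, x \in S -> br_path W h x y -> y \in S.

Definition globally_BR_stable (R : realType) (V : finType) (W : V -> V -> R)
  (h : V -> R) (S : {set profile V}) : Prop :=
  globally_BR_reachable W h S /\ BR_invariant W h S.

Definition Phi0 (R : realType) (V : finType) (W : V -> V -> R) (h : V -> R)
  (x : profile V) : R :=
  2^-1 * (\sum_(i : V) \sum_(j : V) W i j * act R (x i) * act R (x j))
  + \sum_(i : V) h i * act R (x i).

Definition is_argmax (R : realType) (V : finType) (f : profile V -> R)
  (x : profile V) : Prop :=
  forall y, f y <= f x.

From HB Require Import structures.
From mathcomp Require Import all_boot all_order all_algebra.
From mathcomp Require Import boolp reals.
From mathcomp Require Import ring lra.
Import Order.TTheory GRing.Theory Num.Theory.
Local Open Scope ring_scope.
Set Implicit Arguments. Unset Strict Implicit. Unset Printing Implicit Defensive.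

(* For undirected W the utility of player i is the part of
   Phi(x) = 1/2 x'Wx + h'x that depends on x_i, so Phi is an exact potential;
   conversely, summing utility changes around the four-cycle of deviations of
   two players i, j forces W_ij = W_ji. Two exact potentials differ by a
   function invariant under every unilateral deviation, hence by a constant.
   For stability, take the profiles all of whose BR-paths end in Nash
   equilibria: the potential is nondecreasing along BR-paths and any non-Nash
   profile admits a strictly improving BR-step, so maximisers of the potential
   belong to this set, and so does a potential maximiser among the profiles
   reachable from any given profile. *)

Section Profiles.
Variable V : finType.
Implicit Types (x y : profile V) (i j : V) (a b : bool).

Lemma upd_eq x i a : upd x i a i = a.
Proof. by rewrite ffunE eqxx. Qed.

Lemma upd_neq x i a j : j != i -> upd x i a j = x j.
Proof. by move=> ji; rewrite ffunE (negbTE ji). Qed.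

Lemma upd_id x i : upd x i (x i) = x.
Proof. by apply/ffunP => k; rewrite ffunE; case: eqP => // ->. Qed.

Lemma upd_agree x y i : (forall j, j != i -> y j = x j) -> upd x i (y i) = y.
Proof. by move=> xy; apply/ffunP => k; rewrite ffunE; case: eqP => [->|/eqP/xy]. Qed.

Lemma upd_comm x i j a b :
  i != j -> upd (upd x i a) j b = upd (upd x j b) i a.
Proof.
move=> ij; apply/ffunP => k; rewrite !ffunE.
by case: eqP => [->|//]; rewrite eq_sym (negbTE ij).
Qed.

Lemma unilateral_invariant_const (T : Type) (f : profile V -> T) :
  (forall x i a, f (upd x i a) = f x) -> forall x y, f x = f y.
Proof.
move=> f_upd x y.
suff mix (s : seq V) : f x = f [ffun k => if k \in s then y k else x k].
  by rewrite (mix (enum V)); congr f; apply/ffunP => k; rewrite !ffunE mem_enum.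
elim: s => [|k s ->]; first by congr f; apply/ffunP => k; rewrite ffunE.
rewrite -(f_upd _ k (y k)); congr f; apply/ffunP => k'.
by rewrite !ffunE in_cons; case: eqP => [->|].
Qed.

End Profiles.

Section Potentials.
Variables (R : realType) (V : finType) (W : V -> V -> R) (h : V -> R).
Implicit Types (x y : profile V) (i j : V) (a b : bool).

Lemma exact_potential_upd Phi x i a : is_exact_potential W h Phi ->
  Phi (upd x i a) - Phi x = util W h i (upd x i a) - util W h i x.
Proof. by move=> pot; rewrite pot // => j /upd_neq ->. Qed.

Lemma exact_potential_unique Phi Psi :
  is_exact_potential W h Phi -> is_exact_potential W h Psi ->
  exists C, forall x, Phi x = Psi x + C.
Proof.
move=> potPhi potPsi; pose x0 : profile V := [ffun=> true].
have const := @unilateral_invariant_const V R (fun x => Phi x - Psi x).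
exists (Phi x0 - Psi x0) => x; rewrite -(const _ x); first by ring.
move=> y i a /=; have := exact_potential_upd y i a potPhi.
by rewrite -(exact_potential_upd y i a potPsi); lra.
Qed.

Lemma exact_potential_shift Phi Psi C :
  is_exact_potential W h Psi -> (forall x, Phi x = Psi x + C) ->
  is_exact_potential W h Phi.
Proof. by move=> pot PhiE i x y xy; rewrite !PhiE (pot i x y xy); ring. Qed.

End Potentials.

Section SNCGame.
Variables (R : realType) (V : finType) (W : V -> V -> R) (h : V -> R).
Hypothesis W_diag : zero_diag W.
Implicit Types (x y : profile V) (i j : V) (a b : bool).

Lemma util_upd2 x i j a b : i != j ->
  util W h i (upd (upd x i a) j b) =
  act R a * (h i + W i j * act R b + \sum_(k | k != j) W i k * act R (x k)).
Proof.
move=> ij; rewrite /util (bigD1 j) //= (upd_eq (upd x i a)).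
rewrite (upd_neq _ _ (_ : i != j)) // upd_eq mulrC -mulrDr addrA; congr (_ * (_ + _)).
apply: eq_bigr => k kj; case: (eqVneq k i) => [->|ki]; first by rewrite W_diag !mul0r.
by rewrite upd_neq // upd_neq.
Qed.

(* Around the four-cycle of unilateral deviations (a,b) -> (~a,b) -> (~a,~b)
   -> (a,~b) -> (a,b) of players i and j, the utility differences must sum to
   zero; they sum to 4 (W j i - W i j). *)
Lemma exact_potential_undirected : exact_potential_game W h -> undirected W.
Proof.
case=> Phi pot i j; case: (eqVneq i j) => [->//|ij].
pose x0 : profile V := [ffun=> true].
pose p a b := upd (upd x0 i a) j b.
have Ui a b : util W h i (p a b) =
    act R a * (h i + W i j * act R b + \sum_(k | k != j) W i k * act R (x0 k)).
  exact: util_upd2.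
have Uj a b : util W h j (p a b) =
    act R b * (h j + W j i * act R a + \sum_(k | k != i) W j k * act R (x0 k)).
  by rewrite /p upd_comm // util_upd2 // eq_sym.
have dev_i a a' b : forall k, k != i -> p a b k = p a' b k.
  by move=> k ki; rewrite /p !ffunE (negbTE ki).
have dev_j a b b' : forall k, k != j -> p a b k = p a b' k.
  by move=> k kj; rewrite /p ffunE (negbTE kj) [RHS]ffunE (negbTE kj).
have e1 := pot i _ _ (dev_i true false true).
have e2 := pot j _ _ (dev_j false true false).
have e3 := pot i _ _ (dev_i false true false).
have e4 := pot j _ _ (dev_j true false true).
move: e1 e2 e3 e4; rewrite !Ui !Uj /act; lra.
Qed.

Hypothesis W_sym : undirected W.

Definition Phi0_off i x : R :=
  2^-1 * (\sum_(j | j != i) \sum_(k | k != i) W j k * act R (x j) * act R (x k))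
  + \sum_(j | j != i) h j * act R (x j).

Lemma Phi0_off_agree i x y :
  (forall j, j != i -> x j = y j) -> Phi0_off i x = Phi0_off i y.
Proof.
move=> xy; rewrite /Phi0_off; congr (_ * _ + _).
  by apply: eq_bigr => j ji; apply: eq_bigr => k ki; rewrite !xy.
by apply: eq_bigr => j ji; rewrite xy.
Qed.

(* The two cross terms W i k x_i x_k and W k i x_k x_i of the quadratic form
   merge by symmetry, which cancels the factor 1/2. *)
Lemma Phi0_util_split i x : Phi0 W h x = util W h i x + Phi0_off i x.
Proof.
rewrite /Phi0 /util /Phi0_off.
set S := \sum_(k : V) W i k * act R (x k).
have S_off : S = \sum_(k | k != i) W i k * act R (x k).
  by rewrite /S (bigD1 i) //= W_diag mul0r add0r.
have row_i : \sum_(k : V) W i k * act R (x i) * act R (x k) = act R (x i) * S.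
  by rewrite /S mulr_sumr; apply: eq_bigr => k _; ring.
have rows_off : \sum_(j | j != i) \sum_(k : V) W j k * act R (x j) * act R (x k)
    = act R (x i) * S
      + \sum_(j | j != i) \sum_(k | k != i) W j k * act R (x j) * act R (x k).
  rewrite S_off mulr_sumr -big_split /=; apply: eq_bigr => j ji.
  by rewrite (bigD1 i) //= W_sym; congr (_ + _); ring.
rewrite [\sum_(j : V) h j * _](bigD1 i) //= (bigD1 i) //= row_i rows_off.
lra.
Qed.

Lemma Phi0_exact_potential : is_exact_potential W h (Phi0 W h).
Proof.
move=> i x y xy.
by rewrite (Phi0_util_split i x) (Phi0_util_split i y) (Phi0_off_agree xy); ring.
Qed.

End SNCGame.

Section BestResponseDynamics.
Variables (R : realType) (V : finType) (W : V -> V -> R) (h : V -> R).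
Implicit Types (x y z : profile V) (i : V).

Lemma br_path_trans x y z :
  br_path W h x y -> br_path W h y z -> br_path W h x z.
Proof. by elim=> // u v w uv _ IH /IH; apply: br_path_cons uv. Qed.

Definition nash_absorbing x := forall z, br_path W h x z -> nash W h z.

Variable Phi : profile V -> R.
Hypothesis Phi_pot : is_exact_potential W h Phi.

Lemma br_step_potential_le x y : br_step W h x y -> Phi x <= Phi y.
Proof.
case=> i [yx [best _]]; have := best (x i); rewrite upd_id upd_agree // => le_xy.
by rewrite -subr_ge0 -(@Phi_pot i x y) ?subr_ge0 // => j /yx ->.
Qed.

Lemma br_path_potential_le x y : br_path W h x y -> Phi x <= Phi y.
Proof. by elim=> // u v w /br_step_potential_le uv _; apply: le_trans. Qed.

(* With two actions, any strictly improving deviation is a best response. *)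
Lemma nash_of_no_improving_step z :
  (forall y, br_step W h z y -> Phi y <= Phi z) -> nash W h z.
Proof.
move=> no_improve i b; rewrite upd_id leNgt; apply/negP => improving.
have bz : b != z i by apply: contraTneq improving => ->; rewrite upd_id ltxx.
suff /no_improve : br_step W h z (upd z i b).
  by rewrite -subr_le0 (exact_potential_upd _ _ _ Phi_pot) subr_le0 leNgt improving.
exists i; split; first by move=> j /upd_neq.
rewrite upd_eq; split=> // c.
have [->//|cb] := eqVneq c b.
have -> : c = z i by move: bz cb; clear improving; case: b c (z i) => [] [] [].
by rewrite upd_id ltW.
Qed.

Lemma br_reachable_potential_max x :
  exists2 y, br_path W h x y & forall z, br_path W h x z -> Phi z <= Phi y.
Proof.
pose reachable := [pred z | `[< br_path W h x z >]].
have x_reachable : reachable x by apply/asboolP; apply: br_path_nil.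
case: (arg_maxP Phi x_reachable) => y /asboolP xy ymax.
by exists y => // z /asboolP/ymax.
Qed.

Lemma argmax_nash_absorbing x : is_argmax Phi x -> nash_absorbing x.
Proof.
move=> xmax z xz; apply: nash_of_no_improving_step => y _.
exact: le_trans (xmax y) (br_path_potential_le xz).
Qed.

Lemma br_reachable_nash_absorbing x :
  exists2 y, br_path W h x y & nash_absorbing y.
Proof.
have [y xy ymax] := br_reachable_potential_max x.
exists y => // z yz; apply: nash_of_no_improving_step => w zw.
apply: le_trans (br_path_potential_le yz); apply: ymax.
by apply: br_path_trans xy (br_path_trans yz (br_path_cons zw (br_path_nil _ _ _))).
Qed.

Theorem exact_potential_BR_stable_set : exists Nbar : {set profile V},
  globally_BR_stable W h Nbar /\
  (forall x, is_argmax Phi x -> x \in Nbar) /\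
  (forall x, x \in Nbar -> nash W h x).
Proof.
exists [set x | `[< nash_absorbing x >]]; split; [split|split].
- move=> x; have [y xy yabs] := br_reachable_nash_absorbing x.
  by exists y; rewrite // inE; apply/asboolP.
- move=> x y; rewrite !inE => /asboolP xabs xy; apply/asboolP => z yz.
  exact: xabs (br_path_trans xy yz).
- by move=> x /argmax_nash_absorbing xabs; rewrite inE; apply/asboolP.
- by move=> x; rewrite inE => /asboolP; apply; apply: br_path_nil.
Qed.

End BestResponseDynamics.

Theorem proposition1 (R : realType) (V : finType) (W : V -> V -> R) (h : V -> R)
  (HV : (0 < #|V|)%N) (HW : zero_diag W) :
  (exact_potential_game W h <-> undirected W) /\
  (undirected W ->
    (forall Phi : profile V -> R,
       is_exact_potential W h Phi <->
       exists C : R, forall x, Phi x = Phi0 W h x + C) /\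
    (exists Nbar : {set profile V},
       globally_BR_stable W h Nbar /\
       (forall x, is_argmax (Phi0 W h) x -> x \in Nbar) /\
       (forall x, x \in Nbar -> nash W h x))).
Proof.
split.
  split; first exact: exact_potential_undirected.
  by move=> W_sym; exists (Phi0 W h); apply: Phi0_exact_potential.
move=> W_sym; have Phi0_pot : is_exact_potential W h (Phi0 W h).
  exact: Phi0_exact_potential.
split=> [Phi|]; first split=> [Phi_pot | [C PhiE]].
- exact: exact_potential_unique Phi_pot Phi0_pot.
- exact: exact_potential_shift Phi0_pot PhiE.
- exact: (exact_potential_BR_stable_set (Phi := Phi0 W h)).
Qed.
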